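(* Let $W$ be a channel from $\{1,\dots,m\}$ to $\{1,\dots,n\}$ and let $s$ be the number of distinct values among the entries $W_{i,j}$. Then every $\lambda\in\Lambda(W)$ satisfies \[ \mathrm{w}(\lambda)\ge \max\big(\lceil\log_2 s\rceil,\ \mathrm{w}(W_{1,*}),\dots,\mathrm{w}(W_{m,*})\big). \]
   Context: A channel is a row-stochastic matrix; $\mathcal{D}$ is the set of deterministic (0-1) channels from $\{1,\dots,m\}$ to $\{1,\dots,n\}$. $\Lambda(W)=\{\lambda\text{ probability distribution on }\mathcal{D}: W=\sum_D\lambda_DD\}$. $\mathrm{w}(x)$ is the number of nonzero entries of a vector $x$ (for $\lambda$, the size of its support); $W_{i,*}$ is the $i$-th row of $W$. *)

From HB Require Import structures.
From mathcomp Require Import all_boot all_order all_algebra.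
Set Implicit Arguments. Unset Strict Implicit. Unset Printing Implicit Defensive.
Import Order.TTheory GRing.Theory Num.Theory.
Local Open Scope ring_scope.

Definition is_channel (R : realFieldType) (m n : nat) (W : 'M[R]_(m, n)) : Prop :=
  (forall i j, 0 <= W i j) /\ (forall i, \sum_(j < n) W i j = 1).

(* Deterministic channels are the 0-1 row-stochastic matrices; each is determined
   by the function sending row i to the column of its unique 1.  We index D by
   these functions, f : {ffun 'I_m -> 'I_n}, and detmx f is the corresponding
   0-1 matrix. *)
Definition detmx (R : realFieldType) (m n : nat) (f : {ffun 'I_m -> 'I_n})
  : 'M[R]_(m, n) := \matrix_(i, j) (f i == j)%:R.

Definition in_Lambda (R : realFieldType) (m n : nat) (W : 'M[R]_(m, n))
  (lam : {ffun {ffun 'I_m -> 'I_n} -> R}) : Prop :=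
  (forall f, 0 <= lam f) /\ (\sum_f lam f = 1) /\
  W = \sum_f lam f *: detmx R f.

Definition wdist (R : realFieldType) (m n : nat)
  (lam : {ffun {ffun 'I_m -> 'I_n} -> R}) : nat :=
  #|[set f | lam f != 0]|.

Definition wrow (R : realFieldType) (m n : nat) (W : 'M[R]_(m, n)) (i : 'I_m) : nat :=
  #|[set j | W i j != 0]|.

Definition num_values (R : realFieldType) (m n : nat) (W : 'M[R]_(m, n)) : nat :=
  size (undup [seq W i j | i <- enum 'I_m, j <- enum 'I_n]).

(* ceil(log2 s) (with the convention 0 for s <= 1) *)
Definition ceil_log2 (s : nat) : nat := up_log 2 s.

From HB Require Import structures.
From mathcomp Require Import all_boot all_order all_algebra.
Import Order.TTheory GRing.Theory Num.Theory.
Local Open Scope ring_scope.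

(* Writing W = sum_D lambda_D D, the entry W_ij is the sum of lambda_D over the
   D in the support of lambda with D(i) = j.  Hence every entry is a subset sum
   of the weights on the support, so W has at most 2^w(lambda) distinct
   entries; and a nonzero entry W_ij needs some D in the support with D(i) = j,
   so row i has at most w(lambda) nonzero entries.  Neither bound uses that
   lambda is a probability distribution. *)

Lemma size_undup_subset_sums (T : finType) (V : nmodType) (w : T -> V)
    (S : {set T}) (s : seq V) :
  {in s, forall x, exists2 A : {set T}, A \subset S & x = \sum_(t in A) w t} ->
  (size (undup s) <= 2 ^ #|S|)%N.
Proof.
move=> s_sums; rewrite -card_powerset.
rewrite -(size_image (fun A : {set T} => \sum_(t in A) w t)).
apply: uniq_leq_size => [|x]; first exact: undup_uniq.
rewrite mem_undup => /s_sums[A sAS ->].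
by apply: image_f; rewrite powersetE.
Qed.

Section DeterministicDecomposition.

Variables (R : realFieldType) (m n : nat).
Variable lam : {ffun {ffun 'I_m -> 'I_n} -> R}.

Definition supp_fiber (i : 'I_m) (j : 'I_n) : {set {ffun 'I_m -> 'I_n}} :=
  [set f | (lam f != 0) && (f i == j)].

Lemma sum_detmxE i j :
  (\sum_f lam f *: detmx R f) i j = \sum_(f in supp_fiber i j) lam f.
Proof.
rewrite summxE (bigID (mem (supp_fiber i j))) /= [X in _ + X]big1 ?addr0.
  by apply: eq_bigr => f; rewrite inE => /andP[_ /eqP fij]; rewrite !mxE fij eqxx mulr1.
move=> f; rewrite inE negb_and negbK => /orP[/eqP ->|/negbTE fij].
  by rewrite scale0r mxE.
by rewrite !mxE fij mulr0.
Qed.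

Lemma num_values_sum_detmx :
  (num_values (\sum_f lam f *: detmx R f) <= 2 ^ wdist lam)%N.
Proof.
apply: size_undup_subset_sums => _ /allpairsP[[i j] /= [_ _ ->]].
exists (supp_fiber i j); last exact: sum_detmxE.
by apply/subsetP => f; rewrite !inE => /andP[].
Qed.

Lemma wrow_sum_detmx i : (wrow (\sum_f lam f *: detmx R f) i <= wdist lam)%N.
Proof.
apply: leq_trans (leq_imset_card (fun f : {ffun 'I_m -> 'I_n} => f i) _).
apply: subset_leq_card; apply/subsetP => j; rewrite inE sum_detmxE.
have [->|[f]] := set_0Vmem (supp_fiber i j); first by rewrite big_set0 eqxx.
by rewrite inE => /andP[lamf /eqP <-] _; apply: imset_f; rewrite inE.
Qed.

End DeterministicDecomposition.

Theorem proposition13 (R : realFieldType) (m n : nat) (W : 'M[R]_(m, n))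
  (lam : {ffun {ffun 'I_m -> 'I_n} -> R}) :
  is_channel W -> in_Lambda W lam ->
  (maxn (ceil_log2 (num_values W)) (\max_(i < m) wrow W i) <= wdist lam)%N.
Proof.
move=> _ [_ [_ ->]]; rewrite geq_max; apply/andP; split.
  by apply: up_log_min; last exact: num_values_sum_detmx.
by apply/bigmax_leqP => i _; apply: wrow_sum_detmx.
Qed.
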